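(* Let $h:\mathbb{R}^p\to\mathbb{R}$ be a $\gamma$-strongly concave function with $\gamma>0$ whose gradient is Lipschitz continuous with constant $M>0$. Let $c\ge0$ and let $\varphi:\mathbb{R}^p\to\mathbb{R}^p$ be a mapping with $\|\varphi(\mathbf{z})\|\le c$ for all $\mathbf{z}\in\mathbb{R}^p$. For $\mathbf{z}\in\mathbb{R}^p$ and $\beta\in(0,\frac{\gamma}{8M^2}]$ define $\mathbf{y}=\mathbf{z}+\beta(\nabla h(\mathbf{z})+\varphi(\mathbf{z}))$. Then there is a compact set $V\subset\mathbb{R}^p$, depending on $c$ and $h$ but not on $\beta$, such that $$\|\mathbf{y}\|\le\|\mathbf{z}\|\ \text{ if }\mathbf{z}\notin V,\qquad \|\mathbf{y}\|\le R\ \text{ if }\mathbf{z}\in V,$$ where $R=\max_{\mathbf{v}\in V}\{\|\mathbf{v}\|+\frac{\gamma}{8M^2}\|\nabla h(\mathbf{v})\|\}+\frac{\gamma c}{8M^2}$. *)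

From Stdlib Require Import Reals.
From mathcomp Require Import all_boot.
Set Implicit Arguments.
Unset Strict Implicit.
Unset Printing Implicit Defensive.
Open Scope R_scope.

Definition vec (p : nat) := 'I_p -> R.

Definition vadd p (x y : vec p) : vec p := fun i => x i + y i.
Definition vsub p (x y : vec p) : vec p := fun i => x i - y i.
Definition vscale p (a : R) (x : vec p) : vec p := fun i => a * x i.

Definition dot p (x y : vec p) : R := \big[Rplus/0]_(i < p) (x i * y i).
Definition vnorm p (x : vec p) : R := sqrt (dot x x).

Definition is_gradient p (h : vec p -> R) (g : vec p -> vec p) : Prop :=
  forall x eps, 0 < eps -> exists delta, 0 < delta /\
    forall d : vec p, vnorm d < delta ->
      Rabs (h (vadd x d) - h x - dot (g x) d) <= eps * vnorm d.

Definition lipschitz p (M : R) (F : vec p -> vec p) : Prop :=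
  forall x y, vnorm (vsub (F x) (F y)) <= M * vnorm (vsub x y).

Definition strongly_concave p (gamma : R) (h : vec p -> R) : Prop :=
  forall x y t, 0 <= t <= 1 ->
    t * h x + (1 - t) * h y + gamma / 2 * t * (1 - t) * (vnorm (vsub x y))^2
      <= h (vadd (vscale t x) (vscale (1 - t) y)).

Definition compact_set p (V : vec p -> Prop) : Prop :=
  forall u : nat -> vec p, (forall n, V (u n)) ->
    exists (phi : nat -> nat) (l : vec p),
      (forall n, (phi n < phi n.+1)%nat) /\ V l /\
      forall eps, 0 < eps -> exists N : nat, forall n : nat, (N <= n)%nat ->
        vnorm (vsub (u (phi n)) l) < eps.

(* Strong concavity makes the gradient strongly monotone,
   <grad h z - grad h 0, z> <= -gamma |z|^2, so the drift w = grad h z + phi z satisfies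
   <w, z> <= b |z| - gamma |z|^2 and |w| <= b + M |z| with b = |grad h 0| + c.  Since
   |z + beta w|^2 - |z|^2 = beta (2 <w, z> + beta |w|^2), the step does not increase the norm as
   soon as |z| >= 2b/gamma + b/M + 1 and beta <= gamma / (8 M^2).  V is the closed ball of that
   radius: it is compact, the Lipschitz function |v| + gamma/(8M^2) |grad h v| attains its maximum
   on it, and inside V the triangle inequality gives the bound R. *)

From Stdlib Require Import Reals Lra Psatz FunctionalExtensionality ClassicalEpsilon Classical.
From HB Require Import structures.
From mathcomp Require Import all_boot.
Open Scope R_scope.
Set Implicit Arguments.

HB.instance Definition _ := Monoid.isComLaw.Build R 0 Rplus
  (fun a b c => esym (Rplus_assoc a b c)) Rplus_comm Rplus_0_l.

Section Vectors.
Variable p : nat.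
Implicit Types (x y z : vec p) (F G : 'I_p -> R).

Lemma sumR_mull a F : \big[Rplus/0]_(i < p) (a * F i) = a * \big[Rplus/0]_(i < p) F i.
Proof. by apply: (big_ind2 (fun u v => u = a * v)) => [|? ? ? ? -> ->|]; rewrite //=; ring. Qed.

Lemma sumR_le F G : (forall i, F i <= G i) ->
  \big[Rplus/0]_(i < p) F i <= \big[Rplus/0]_(i < p) G i.
Proof. by move=> FG; apply: (big_ind2 Rle) => [|? ? ? ? *|i _]; [lra|lra|apply: FG]. Qed.

Lemma sumR_ge0 F : (forall i, 0 <= F i) -> 0 <= \big[Rplus/0]_(i < p) F i.
Proof. by move=> F0; apply: (big_ind (Rle 0)) => [|? ? *|i _]; [lra|lra|apply: F0]. Qed.

Lemma sumR_const a : \big[Rplus/0]_(i < p) a = INR p * a.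
Proof.
rewrite big_const_ord; elim: p => [|n IH] /=; first ring.
rewrite IH; case: n {IH} => [|n] /=; ring.
Qed.

Lemma dotC x y : dot x y = dot y x.
Proof. by apply: eq_bigr => i _; ring. Qed.

Lemma dot_addl x y z : dot (vadd x y) z = dot x z + dot y z.
Proof. by rewrite /dot -big_split /=; apply: eq_bigr => i _; rewrite /vadd; ring. Qed.

Lemma dot_scalel a x z : dot (vscale a x) z = a * dot x z.
Proof. by rewrite /dot -sumR_mull; apply: eq_bigr => i _; rewrite /vscale; ring. Qed.

Lemma dot_subl x y z : dot (vsub x y) z = dot x z - dot y z.
Proof.
rewrite /dot /Rminus -(Rmult_1_l (\big[Rplus/0]_(i < p) (y i * z i))) Ropp_mult_distr_l.
by rewrite -sumR_mull -big_split /=; apply: eq_bigr => i _; rewrite /vsub; ring.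
Qed.

Lemma dot_addr x y z : dot z (vadd x y) = dot z x + dot z y.
Proof. by rewrite dotC dot_addl !(dotC z). Qed.

Lemma dot_scaler a x z : dot z (vscale a x) = a * dot z x.
Proof. by rewrite dotC dot_scalel dotC. Qed.

Lemma dot_subr x y z : dot z (vsub x y) = dot z x - dot z y.
Proof. by rewrite dotC dot_subl !(dotC z). Qed.

Lemma dot_ge0 x : 0 <= dot x x.
Proof. by apply: sumR_ge0 => i; nra. Qed.

Lemma vnorm_ge0 x : 0 <= vnorm x.
Proof. exact: sqrt_pos. Qed.

Lemma vnorm_sq x : vnorm x ^ 2 = dot x x.
Proof. by rewrite /vnorm /= Rmult_1_r sqrt_sqrt //; apply: dot_ge0. Qed.

Lemma vnorm_coord x i : Rabs (x i) <= vnorm x.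
Proof.
rewrite /vnorm -sqrt_Rsqr_abs; apply: sqrt_le_1_alt.
rewrite /dot (bigD1 i) //= /Rsqr.
rewrite -[X in X <= _]Rplus_0_r; apply: Rplus_le_compat_l.
by apply: (big_ind (Rle 0)) => [|? ? *|j _]; [lra|lra|nra].
Qed.

Lemma vnorm_eq0_dot x y : vnorm x = 0 -> dot x y = 0.
Proof.
move=> x0; rewrite /dot big1 // => i _.
have := vnorm_coord x i; rewrite x0 => xi0.
have -> : x i = 0 by move: xi0; split_Rabs; lra.
ring.
Qed.

Lemma cauchy_schwarz x y : dot x y <= vnorm x * vnorm y.
Proof.
case: (Req_dec (vnorm x) 0) => [x0|x0].
  by rewrite vnorm_eq0_dot // x0; lra.
case: (Req_dec (vnorm y) 0) => [y0|y0].
  by rewrite dotC vnorm_eq0_dot // y0; lra.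
have key := dot_ge0 (vsub (vscale (vnorm y) x) (vscale (vnorm x) y)).
rewrite dot_subl !dot_subr !dot_scalel !dot_scaler (dotC y x) -!vnorm_sq in key.
have := vnorm_ge0 x; have := vnorm_ge0 y => ? ?.
have pos : 0 < vnorm x * vnorm y by apply: Rmult_lt_0_compat; lra.
apply: (Rmult_le_reg_l (vnorm x * vnorm y)) => //; nra.
Qed.

Lemma vnorm_add x y : vnorm (vadd x y) <= vnorm x + vnorm y.
Proof.
have := cauchy_schwarz x y; have := vnorm_ge0 (vadd x y).
have := vnorm_ge0 x; have := vnorm_ge0 y.
have : vnorm (vadd x y) ^ 2 = vnorm x ^ 2 + 2 * dot x y + vnorm y ^ 2.
  by rewrite !vnorm_sq dot_addl !dot_addr (dotC y x); ring.
nra.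
Qed.

Lemma vnorm_scale a x : vnorm (vscale a x) = Rabs a * vnorm x.
Proof.
rewrite /vnorm dot_scalel dot_scaler -Rmult_assoc sqrt_mult ?sqrt_Rsqr_abs //.
  by nra.
exact: dot_ge0.
Qed.

Lemma eq_vnorm x y : (forall i, x i = y i) -> vnorm x = vnorm y.
Proof. by move=> xy; rewrite /vnorm /dot; congr sqrt; apply: eq_bigr => i _; rewrite xy. Qed.

Lemma vnorm_sub_le x y : vnorm x <= vnorm y + vnorm (vsub x y).
Proof.
rewrite (@eq_vnorm x (vadd y (vsub x y))); first exact: vnorm_add.
by move=> i; rewrite /vadd /vsub; ring.
Qed.

Lemma vnorm_subC x y : vnorm (vsub x y) = vnorm (vsub y x).
Proof.
rewrite (@eq_vnorm (vsub x y) (vscale (-1) (vsub y x))).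
  by rewrite vnorm_scale Rabs_Ropp Rabs_R1 Rmult_1_l.
by move=> i; rewrite /vsub /vscale; ring.
Qed.

Definition vzero : vec p := fun _ => 0.

Lemma vsubr0 x : vsub x vzero = x.
Proof. by apply: functional_extensionality => i; rewrite /vsub /vzero; ring. Qed.

Lemma vnorm0 : vnorm vzero = 0.
Proof. by rewrite /vnorm /dot big1 ?sqrt_0 // => i _; rewrite /vzero; ring. Qed.

End Vectors.

Arguments vzero {p}.

Lemma lipschitz_vnorm_le p M (F : vec p -> vec p) x y : lipschitz M F ->
  vnorm (F x) <= vnorm (F y) + M * vnorm (vsub x y).
Proof. by move=> FM; have := vnorm_sub_le (F x) (F y); have := FM x y; lra. Qed.

Lemma Rle_of_le_epsilon_scaled a b K : 0 <= K ->
  (forall e, 0 < e -> a <= b + e * K) -> a <= b.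
Proof.
move=> K0 H; apply: Rle_plus_epsilon => e e0.
have eK0 : 0 < e / (K + 1) by apply: Rdiv_lt_0_compat; lra.
have := H _ eK0.
have : e / (K + 1) * K <= e.
  apply: (Rmult_le_reg_r (K + 1)); first lra.
  have -> : e / (K + 1) * K * (K + 1) = e * K by field; lra.
  nra.
lra.
Qed.

Section StronglyConcave.
Variables (p : nat) (h : vec p -> R) (g : vec p -> vec p) (gamma : R).
Hypotheses (gamma0 : 0 <= gamma) (hg : is_gradient h g)
  (hconc : strongly_concave gamma h).

Lemma strongly_concave_segment x y t : 0 <= t <= 1 ->
  h y + t * (h x - h y) + gamma / 2 * t * (1 - t) * vnorm (vsub x y) ^ 2
    <= h (vadd y (vscale t (vsub x y))).
Proof.
move=> t01; have := hconc x y t01.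
have -> : vadd (vscale t x) (vscale (1 - t) y) = vadd y (vscale t (vsub x y)).
  by apply: functional_extensionality => i; rewrite /vadd /vscale /vsub; ring.
lra.
Qed.

Lemma strongly_concave_gradient_le x y :
  h x - h y + gamma / 2 * vnorm (vsub x y) ^ 2 <= dot (g y) (vsub x y).
Proof.
set d := vsub x y; set n := vnorm d; set D := dot (g y) d.
have n0 : 0 <= n := vnorm_ge0 d.
apply: (@Rle_of_le_epsilon_scaled _ _ (n + gamma / 2 * n ^ 2)); first nra.
move=> e e0; have [delta [delta0 Hdelta]] := hg y e0.
pose t := Rmin e (Rmin 1 (delta / (n + 1))).
have t0 : 0 < t.
  by repeat apply: Rmin_glb_lt => //; [lra | apply: Rdiv_lt_0_compat; lra].
have te : t <= e := Rmin_l _ _.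
have t1 : t <= 1 := Rle_trans _ _ _ (Rmin_r _ _) (Rmin_l _ _).
have tn : t * n < delta.
  have : t <= delta / (n + 1) := Rle_trans _ _ _ (Rmin_r _ _) (Rmin_r _ _).
  have -> : delta / (n + 1) = delta * / (n + 1) by [].
  move=> /(Rmult_le_compat_r (n + 1)); rewrite Rmult_assoc Rinv_l; nra.
have tabs : Rabs t = t by apply: Rabs_pos_eq; lra.
have := Hdelta (vscale t d); rewrite vnorm_scale tabs dot_scaler -/n -/D.
move=> /(_ tn) /(Rle_trans _ _ _ (Rle_abs _)) lin.
have := @strongly_concave_segment x y t (conj (Rlt_le _ _ t0) t1); rewrite -/d -/n => conc.
(* Both bounds on h (y + t d), divided by t; the defect gamma/2 t n^2 is O(e) since t <= e. *)
have slope : h x - h y + gamma / 2 * (1 - t) * n ^ 2 <= D + e * n.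
  by apply: (Rmult_le_reg_l t) => //; nra.
have : gamma / 2 * n ^ 2 * t <= gamma / 2 * n ^ 2 * e by apply: Rmult_le_compat_l; nra.
nra.
Qed.

Lemma gradient_strongly_monotone x y :
  dot (vsub (g x) (g y)) (vsub x y) <= - gamma * vnorm (vsub x y) ^ 2.
Proof.
have := strongly_concave_gradient_le x y; have := strongly_concave_gradient_le y x.
rewrite (vnorm_subC y x) dot_subl !dot_subr; lra.
Qed.

End StronglyConcave.

Definition seq_cvg (u : nat -> R) (l : R) : Prop :=
  forall eps, 0 < eps -> exists N : nat, forall n : nat, (N <= n)%N -> Rabs (u n - l) < eps.

Definition strictly_increasing (phi : nat -> nat) : Prop := forall n, (phi n < phi n.+1)%N.

Lemma strictly_increasing_geq phi : strictly_increasing phi -> forall n, (n <= phi n)%N.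
Proof. by move=> phiS; elim=> [|n IH] //; apply: leq_ltn_trans IH (phiS n). Qed.

Lemma strictly_increasing_comp phi psi :
  strictly_increasing phi -> strictly_increasing psi -> strictly_increasing (phi \o psi).
Proof.
move=> phiS psiS n /=.
have phi_mono : {homo phi : i j / (i < j)%N} by apply: homo_ltn => // ? ? ?; apply: ltn_trans.
exact/phi_mono/psiS.
Qed.

Lemma seq_cvg_subseq u l phi :
  strictly_increasing phi -> seq_cvg u l -> seq_cvg (u \o phi) l.
Proof.
move=> phiS ul eps eps0; have [N HN] := ul eps eps0.
by exists N => n Nn; apply: HN; apply: leq_trans Nn (strictly_increasing_geq phiS n).
Qed.

Lemma inv_succ_lt eps : 0 < eps ->
  exists N : nat, forall n : nat, (N <= n)%N -> / (INR n + 1) < eps.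
Proof.
move=> eps0; have [N [NE /lt_0_INR N0]] := archimed_cor1 eps eps0.
exists N => n /leP /le_INR Nn; apply: Rle_lt_trans NE.
by apply: Rinv_le_contravar => //=; lra.
Qed.

Lemma bolzano_weierstrass_subseq (u : nat -> R) r : (forall n, Rabs (u n) <= r) ->
  exists phi l, strictly_increasing phi /\ seq_cvg (u \o phi) l.
Proof.
(* Stdlib only provides a cluster value l; the subsequence picks its n-th index beyond the
   previous one and within 1/(n+1) of l. *)
move=> ur.
have [l lu] : exists l, ValAdh u l.
  apply: (@Bolzano_Weierstrass u (fun x => -r <= x <= r)); first exact: compact_P3.
  by move=> n; have := ur n; split_Rabs; lra.
have near_l k m : exists q, (m <= q)%N /\ Rabs (u q - l) < / (INR k + 1).
  have k0 : 0 < / (INR k + 1) by apply: Rinv_0_lt_compat; have := pos_INR k; lra.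
  have ball_l : neighbourhood (fun z => Rabs (z - l) < / (INR k + 1)) l.
    by exists (mkposreal _ k0).
  have [q [/leP mq ql]] := lu _ m ball_l.
  by exists q.
have [sel selP] := choice (fun km q => (km.2 <= q)%N /\ Rabs (u q - l) < / (INR km.1 + 1))
  (fun km => near_l km.1 km.2).
pose fix phi n := if n is n'.+1 then sel (n, (phi n').+1) else sel (0%N, 0%N).
exists phi, l; split; first by move=> n /=; case: (selP (n.+1, (phi n).+1)).
move=> eps eps0; have [N HN] := inv_succ_lt eps0; exists N => n Nn.
apply: Rlt_trans (HN n Nn).
by case: n {Nn} => [|n]; [case: (selP (0%N, 0%N)) | case: (selP (n.+1, (phi n).+1))].
Qed.

Section ClosedBall.
Variable p : nat.

Lemma bounded_vec_seq_cvg_subseq (u : nat -> vec p) r :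
  (forall n i, Rabs (u n i) <= r) ->
  exists phi (l : vec p), strictly_increasing phi /\
    forall i, seq_cvg (fun n => u (phi n) i) (l i).
Proof.
move=> ur.
have first_coords k : (k <= p)%N -> exists phi (l : vec p), strictly_increasing phi /\
    forall i : 'I_p, (i < k)%N -> seq_cvg (fun n => u (phi n) i) (l i).
  elim: k => [|k IH] kp; first by exists id, (u 0%N); split.
  have [phi [l [phiS ul]]] := IH (ltnW kp).
  pose i0 := Ordinal kp.
  have [psi [l0 [psiS ul0]]] :=
    @bolzano_weierstrass_subseq (fun n => u (phi n) i0) r (fun n => ur (phi n) i0).
  exists (phi \o psi), (fun i => if i == i0 then l0 else l i).
  split; first exact: strictly_increasing_comp.
  move=> i ik; case: (eqVneq i i0) => [-> | ii0]; first exact: ul0.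
  apply: (seq_cvg_subseq psiS (ul i _)).
  by rewrite ltn_neqAle -ltnS ik andbT; move: ii0; rewrite -(inj_eq val_inj).
have [phi [l [phiS ul]]] := first_coords p (leqnn p).
by exists phi, l; split => // i; apply: ul.
Qed.

Lemma vnorm_cvg_of_coords (u : nat -> vec p) (l : vec p) :
  (forall i, seq_cvg (fun n => u n i) (l i)) ->
  forall eps, 0 < eps -> exists N : nat, forall n : nat, (N <= n)%N ->
    vnorm (vsub (u n) l) < eps.
Proof.
move=> ul eps eps0; have p0 := pos_INR p.
pose e := eps / (INR p + 1).
have e0 : 0 < e by apply: Rdiv_lt_0_compat; lra.
have eE : e * (INR p + 1) = eps by rewrite /e; field; lra.
have [N NP] := choice (fun i N => forall n, (N <= n)%N -> Rabs (u n i - l i) < e)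
  (fun i => ul i e e0).
exists (\max_(i < p) N i)%N => n Nn.
have dot_small : dot (vsub (u n) l) (vsub (u n) l) <= INR p * (e * e).
  rewrite -sumR_const; apply: sumR_le => i; rewrite /vsub.
  by have := NP i n (leq_trans (leq_bigmax i) Nn); split_Rabs; nra.
rewrite /vnorm -(sqrt_square eps); last lra.
by apply: sqrt_lt_1_alt; split; [exact: dot_ge0 | nra].
Qed.

Lemma closed_ball_compact r : compact_set (fun z : vec p => vnorm z <= r).
Proof.
move=> u ur.
have [phi [l [phiS ul]]] := @bounded_vec_seq_cvg_subseq u r
  (fun n i => Rle_trans _ _ _ (vnorm_coord _ i) (ur n)).
have cvg := @vnorm_cvg_of_coords (u \o phi) l ul.
exists phi, l; split => //; split => //.
apply: Rle_plus_epsilon => eps eps0; have [N NP] := cvg eps eps0.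
have := vnorm_sub_le l (u (phi N)); rewrite vnorm_subC.
have := ur (phi N); have := NP N (leqnn N); rewrite /=; lra.
Qed.
End ClosedBall.

Section Maximum.
Variables (p : nat) (V : vec p -> Prop) (f : vec p -> R).

Lemma exists_maximizing_seq B v0 : V v0 -> (forall v, V v -> f v <= B) ->
  exists (m : R) (v : nat -> vec p), (forall w, V w -> f w <= m) /\
    forall n, V (v n) /\ m - / (INR n + 1) < f (v n).
Proof.
move=> Vv0 fB; pose E y := exists2 v, V v & y = f v.
have [m [mub mlub]] : {m | is_lub E m}.
  by apply: completeness; [exists B => _ [v Vv ->]; apply: fB | exists (f v0), v0].
have near_m n : exists v, V v /\ m - / (INR n + 1) < f v.
  apply: NNPP => no_v.
  have n0 : 0 < / (INR n + 1) by apply: Rinv_0_lt_compat; have := pos_INR n; lra.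
  suff : m <= m - / (INR n + 1) by lra.
  apply: mlub => _ [v Vv ->]; apply: Rnot_lt_le => mv; apply: no_v; by exists v.
have [v vP] := choice _ near_m.
by exists m, v; split => // w Vw; apply: mub; exists w.
Qed.

Lemma compact_attains_max K B v0 : compact_set V -> V v0 -> 0 <= K ->
  (forall a b, f a <= f b + K * vnorm (vsub a b)) -> (forall v, V v -> f v <= B) ->
  exists2 v, V v & forall w, V w -> f w <= f v.
Proof.
move=> Vc Vv0 K0 fK fB.
have [m [v [mub vP]]] := exists_maximizing_seq Vv0 fB.
have [phi [l [phiS [Vl vl]]]] := Vc v (fun n => proj1 (vP n)).
exists l => // w Vw; apply: Rle_trans (mub w Vw) _.
apply: (@Rle_of_le_epsilon_scaled _ _ (1 + K)); first lra.
move=> eps eps0.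
have [N1 N1P] := inv_succ_lt eps0; have [N2 N2P] := vl eps eps0.
pose n := maxn N1 N2.
have := N1P (phi n) (leq_trans (leq_maxl N1 N2) (strictly_increasing_geq phiS n)).
have := proj2 (vP (phi n)); have := fK (v (phi n)) l.
have : K * vnorm (vsub (v (phi n)) l) <= K * eps.
  by apply: Rmult_le_compat_l; last exact/Rlt_le/N2P/leq_maxr.
lra.
Qed.

End Maximum.

Section Objective.
Variables (p : nat) (g : vec p -> vec p) (M k : R).
Hypotheses (M0 : 0 <= M) (k0 : 0 <= k) (hlip : lipschitz M g).

Lemma objective_lipschitz x y :
  vnorm x + k * vnorm (g x) <= vnorm y + k * vnorm (g y) + (1 + k * M) * vnorm (vsub x y).
Proof.
have := vnorm_sub_le x y; have := lipschitz_vnorm_le x y hlip.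
have := vnorm_ge0 (vsub x y); nra.
Qed.

Lemma objective_le_ball x r : vnorm x <= r ->
  vnorm x + k * vnorm (g x) <= r + k * (vnorm (g vzero) + M * r).
Proof.
move=> xr; have := lipschitz_vnorm_le x vzero hlip; rewrite vsubr0.
have : M * vnorm x <= M * r by apply: Rmult_le_compat_l.
nra.
Qed.

End Objective.

Lemma vnorm_step_le p (z w : vec p) beta : 0 < beta ->
  2 * dot w z + beta * dot w w <= 0 -> vnorm (vadd z (vscale beta w)) <= vnorm z.
Proof.
move=> beta0 drift; apply: sqrt_le_1_alt.
rewrite dot_addl !dot_addr !dot_scalel !dot_scaler (dotC z w).
have : beta * (2 * dot w z + beta * dot w w) <= 0 by nra.
lra.
Qed.

Lemma vnorm_drift_step_le p (g : vec p -> vec p) z w beta k c :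
  vnorm w <= c -> 0 < beta <= k ->
  vnorm (vadd z (vscale beta (vadd (g z) w))) <= vnorm z + k * vnorm (g z) + k * c.
Proof.
move=> wc [beta0 betak].
have := vnorm_add z (vscale beta (vadd (g z) w)).
rewrite vnorm_scale Rabs_pos_eq; last lra.
have := vnorm_add (g z) w; have := vnorm_ge0 (g z); have := vnorm_ge0 w.
nra.
Qed.

(* The radius of the ball V, applied with b = |grad h 0| + c. *)
Definition drift_radius (b gamma M : R) : R := 2 * b / gamma + b / M + 1.

Lemma drift_radius_le b gamma M r : 0 <= b -> 0 < gamma -> 0 < M ->
  drift_radius b gamma M <= r -> [/\ 1 <= r, 2 * b <= gamma * r & b <= M * r].
Proof.
move=> b0 gamma0 M0; rewrite /drift_radius => rb.
have bg : 0 <= 2 * b / gamma by apply: Rmult_le_pos; [lra | apply/Rlt_le/Rinv_0_lt_compat].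
have bM : 0 <= b / M by apply: Rmult_le_pos; [lra | apply/Rlt_le/Rinv_0_lt_compat].
have : 2 * b / gamma * gamma = 2 * b by field; lra.
have : b / M * M = b by field; lra.
split; nra.
Qed.

Lemma quadratic_drift_nonpos b M gamma beta r : 0 <= b -> 0 < M -> 0 < gamma ->
  0 < beta <= gamma / (8 * M ^ 2) -> drift_radius b gamma M <= r ->
  2 * (b * r - gamma * r ^ 2) + beta * (b + M * r) ^ 2 <= 0.
Proof.
move=> b0 M0 gamma0 [beta0 beta_le] rb.
have [r1 b_gr b_Mr] := drift_radius_le b0 gamma0 M0 rb.
have beta_M : beta * (8 * M ^ 2) <= gamma.
  have : gamma / (8 * M ^ 2) * (8 * M ^ 2) = gamma by field; lra.
  nra.
(* beta (b + M r)^2 <= beta 4 M^2 r^2 <= gamma r^2 / 2, while 2 b r <= gamma r^2. *)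
have sq : (b + M * r) ^ 2 <= 4 * M ^ 2 * r ^ 2 by nra.
have : beta * (b + M * r) ^ 2 <= beta * (4 * M ^ 2 * r ^ 2) by apply: Rmult_le_compat_l; lra.
nra.
Qed.

Section Drift.
Variables (p : nat) (g : vec p -> vec p) (gamma M c : R).
Hypotheses (gamma0 : 0 < gamma) (M0 : 0 < M) (c0 : 0 <= c) (hlip : lipschitz M g)
  (hmono : forall x y, dot (vsub (g x) (g y)) (vsub x y) <= - gamma * vnorm (vsub x y) ^ 2).

Let b := vnorm (g vzero) + c.

Lemma vnorm_drift_le z w : vnorm w <= c -> vnorm (vadd (g z) w) <= b + M * vnorm z.
Proof.
move=> wc; have := vnorm_add (g z) w; have := lipschitz_vnorm_le z vzero hlip.
by rewrite vsubr0 /b; lra.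
Qed.

Lemma dot_drift_le z w : vnorm w <= c ->
  dot (vadd (g z) w) z <= b * vnorm z - gamma * vnorm z ^ 2.
Proof.
move=> wc; have := hmono z vzero; rewrite !vsubr0 dot_subl.
have := cauchy_schwarz (g vzero) z; have := cauchy_schwarz w z.
have : c * vnorm z >= vnorm w * vnorm z by have := vnorm_ge0 z; nra.
by rewrite dot_addl /b; lra.
Qed.

Lemma drift_step_contracts z w beta : vnorm w <= c -> 0 < beta <= gamma / (8 * M ^ 2) ->
  drift_radius b gamma M <= vnorm z ->
  vnorm (vadd z (vscale beta (vadd (g z) w))) <= vnorm z.
Proof.
move=> wc beta_le zr; have [beta0 _] := beta_le.
apply: vnorm_step_le => //; rewrite -vnorm_sq.
have b0 : 0 <= b by have := vnorm_ge0 (g vzero); rewrite /b; lra.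
have := quadratic_drift_nonpos b0 M0 gamma0 beta_le zr.
have := dot_drift_le z w wc.
have : beta * vnorm (vadd (g z) w) ^ 2 <= beta * (b + M * vnorm z) ^ 2.
  apply: Rmult_le_compat_l; first lra.
  have := vnorm_drift_le z w wc; have := vnorm_ge0 (vadd (g z) w); nra.
lra.
Qed.

End Drift.

Theorem lemma1 (p : nat) (h : vec p -> R) (gradh : vec p -> vec p)
  (gamma M c : R)
  (Hgamma : 0 < gamma) (HM : 0 < M)
  (Hgrad : is_gradient h gradh)
  (Hconc : strongly_concave gamma h)
  (Hlip : lipschitz M gradh)
  (Hc : 0 <= c) :
  exists V : vec p -> Prop,
    compact_set V /\
    exists Rmax : R,
      (exists v, V v /\ Rmax = vnorm v + gamma / (8 * M ^ 2) * vnorm (gradh v)) /\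
      (forall v, V v -> vnorm v + gamma / (8 * M ^ 2) * vnorm (gradh v) <= Rmax) /\
      forall (varphi : vec p -> vec p), (forall z, vnorm (varphi z) <= c) ->
      forall (beta : R), 0 < beta <= gamma / (8 * M ^ 2) ->
      forall z : vec p,
        let y := vadd z (vscale beta (vadd (gradh z) (varphi z))) in
        (~ V z -> vnorm y <= vnorm z) /\
        (V z -> vnorm y <= Rmax + gamma * c / (8 * M ^ 2)).
Proof.
pose k := gamma / (8 * M ^ 2).
have k0 : 0 <= k by apply/Rlt_le/Rdiv_lt_0_compat; nra.
pose f v := vnorm v + k * vnorm (gradh v).
pose b := vnorm (gradh vzero) + c.
pose r0 := drift_radius b gamma M.
have hmono := gradient_strongly_monotone (Rlt_le _ _ Hgamma) Hgrad Hconc.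
have [vm Vvm vm_max] : exists2 vm, vnorm vm <= r0 & forall w, vnorm w <= r0 -> f w <= f vm.
  apply: (compact_attains_max f (K := 1 + k * M) (B := r0 + k * (vnorm (gradh vzero) + M * r0))
    vzero (@closed_ball_compact p r0)).
  - have b0 : 0 <= b by have := vnorm_ge0 (gradh vzero); rewrite /b; lra.
    have [r0_1 _ _] := drift_radius_le b0 Hgamma HM (Rle_refl r0).
    rewrite vnorm0; lra.
  - nra.
  - exact: objective_lipschitz.
  - by move=> v; apply: objective_le_ball => //; lra.
exists (fun z => vnorm z <= r0); split; first exact: closed_ball_compact.
exists (f vm); split; [by exists vm | split => // varphi varphi_c beta beta_k z y].
split => [/Rnot_le_lt zr0 | zr0].
- exact/(drift_step_contracts Hgamma HM Hc Hlip hmono z _ (varphi_c z) beta_k)/Rlt_le.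
- have -> : gamma * c / (8 * M ^ 2) = k * c by rewrite /k; field; lra.
  apply: Rle_trans (vnorm_drift_step_le _ _ _ (varphi_c z) beta_k) _.
  by have := vm_max z zr0; rewrite /f /k; lra.
Qed.
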